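(* Work in $\mathsf{ZF}$. Let $\mathbb P$ be a forcing notion and let $\mathcal D_{\mathbb P}$ be the class of cardinals $|X|$ such that $\mathbb P$ is ${\leq}|X|$-distributive. Then every natural number (i.e. every finite cardinal) belongs to $\mathcal D_{\mathbb P}$, and $\mathcal D_{\mathbb P}$ is $*$-closed and union-regular.
   Context: Cardinals of non-well-orderable sets are Scott cardinals; $|X|\leq|Y|$ means there is an injection $X\to Y$; $|Y|\leq^*|X|$ means there is a surjection from a subset of $X$ onto $Y$ (or $Y=\varnothing$). $\mathbb P$ is ${\leq}|X|$-distributive if for every family $\langle D_x\mid x\in X\rangle$ of dense open subsets of $\mathbb P$, the set $\bigcap_{x\in X}D_x=\{p\in\mathbb P\mid \forall x\in X\ (p\in D_x)\}$ is dense. A class $\mathcal D$ of cardinals is $*$-closed if whenever $|X|\in\mathcal D$ and $|Y|\leq^*|X|$ then $|Y|\in\mathcal D$. $\mathcal D$ is union-regular if it is directed (under $\leq$) and whenever $|X|\in\mathcal D$ and $\langle A_x\mid x\in X\rangle$ is a sequence of sets with $|A_x|\in\mathcal D$ for all $x\in X$, there is some $|A|\in\mathcal D$ such that $|A_x|\leq|A|$ for all $x\in X$. *)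

From mathcomp Require Import all_boot.
Set Implicit Arguments. Unset Strict Implicit. Unset Printing Implicit Defensive.

(* A forcing notion: a preorder (P, le) with a maximum element;
   [le q p] means "q extends p" (q is stronger). *)
Record forcing_notion (P : Type) (le : P -> P -> Prop) : Prop := {
  fn_refl  : forall p, le p p;
  fn_trans : forall p q r, le r q -> le q p -> le r p;
  fn_top   : exists one : P, forall p, le p one }.

Definition dense (P : Type) (le : P -> P -> Prop) (D : P -> Prop) : Prop :=
  forall p, exists2 q, le q p & D q.

Definition open_set (P : Type) (le : P -> P -> Prop) (D : P -> Prop) : Prop :=
  forall p q, D p -> le q p -> D q.

Definition distributive (P : Type) (le : P -> P -> Prop) (X : Type) : Prop :=
  forall D : X -> P -> Prop,
    (forall x, dense le (D x) /\ open_set le (D x)) ->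
    dense le (fun p => forall x, D x p).

Definition card_le (X Y : Type) : Prop := exists f : X -> Y, injective f.

Definition card_le_star (Y X : Type) : Prop :=
  (Y -> False) \/
  exists (A : X -> Prop) (f : {x : X | A x} -> Y), forall y, exists a, f a = y.

From mathcomp Require Import all_boot.
From Stdlib Require Import Classical Eqdep.

Set Implicit Arguments.
Unset Strict Implicit.

(* Distributivity over an index type passes to subsets, surjective images,
   binary sums and dependent sums: a family of dense open sets indexed by the
   new type is regrouped, by intersecting over fibres, into a family indexed by
   a type already known to be distributive, and intersections of open sets
   stay open.  Finite cardinals are built from the empty and one-point types
   by sums and images, and [X + Y] and [{x : X & A x}] are the bounds that
   union-regularity asks for. *)

Section Distributivity.
Variables (P : Type) (le : P -> P -> Prop).
Hypothesis HP : forcing_notion le.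

Lemma open_set_bigcap (I : Type) (D : I -> P -> Prop) :
  (forall i, open_set le (D i)) -> open_set le (fun p => forall i, D i p).
Proof. by move=> openD p q Dp le_qp i; apply: openD (Dp i) le_qp. Qed.

Lemma distributive_empty (X : Type) : (X -> False) -> distributive le X.
Proof.
move=> noX D _ p; exists p; first exact: (fn_refl HP).
by move=> x; case: (noX x).
Qed.

Lemma distributive_unit : distributive le unit.
Proof.
move=> D denseD p; have [q le_qp Dq] := (denseD tt).1 p.
by exists q => // -[].
Qed.

Lemma distributive_surj (X Y : Type) (f : X -> Y) :
  (forall y, exists x, f x = y) -> distributive le X -> distributive le Y.
Proof.
move=> f_surj distX D denseD p.
have [q le_qp Dq] := distX (fun x => D (f x)) (fun x => denseD (f x)) p.
by exists q => // y; have [x <-] := f_surj y.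
Qed.

Lemma distributive_sub (X : Type) (A : X -> Prop) :
  distributive le X -> distributive le {x | A x}.
Proof.
move=> distX D denseD p.
pose E x q := forall h : A x, D (exist _ x h) q.
have denseE x : dense le (E x).
  move=> p0; have [h | nAx] := classic (A x).
    have [q le_qp Dq] := (denseD (exist _ x h)).1 p0.
    by exists q => // h'; rewrite (proof_irrelevance _ h' h).
  exists p0; first exact: (fn_refl HP).
  by move=> h; case: (nAx h).
have openE x : open_set le (E x).
  by apply: open_set_bigcap => h; apply: (denseD _).2.
have [q le_qp Eq] := distX E (fun x => conj (denseE x) (openE x)) p.
by exists q => // -[x h]; apply: Eq.
Qed.

Lemma distributive_card_le_star (X Y : Type) :
  distributive le X -> card_le_star Y X -> distributive le Y.
Proof.
move=> distX [noY | [A [f f_surj]]]; first exact: distributive_empty.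
exact: distributive_surj f_surj (distributive_sub distX).
Qed.

Lemma distributive_sum (X Y : Type) :
  distributive le X -> distributive le Y -> distributive le (X + Y).
Proof.
move=> distX distY D denseD p.
have [q le_qp DXq] := distX (fun x => D (inl x)) (fun x => denseD (inl x)) p.
have [r le_rq DYr] := distY (fun y => D (inr y)) (fun y => denseD (inr y)) q.
exists r; first exact: (fn_trans HP le_rq le_qp).
case=> [x | y] //; exact: (denseD (inl x)).2 (DXq x) le_rq.
Qed.

Lemma distributive_sigma (X : Type) (A : X -> Type) :
  distributive le X -> (forall x, distributive le (A x)) ->
  distributive le {x : X & A x}.
Proof.
move=> distX distA D denseD p.
pose E x q := forall a : A x, D (existT _ x a) q.
have denseE x : dense le (E x).
  exact: distA x (fun a => D (existT _ x a)) (fun a => denseD _).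
have openE x : open_set le (E x).
  by apply: open_set_bigcap => a; apply: (denseD _).2.
have [q le_qp Eq] := distX E (fun x => conj (denseE x) (openE x)) p.
by exists q => // -[x a]; apply: Eq.
Qed.

Lemma distributive_ord (n : nat) : distributive le 'I_n.
Proof.
elim: n => [|n IHn]; first by apply: distributive_empty => -[].
pose f (u : 'I_n + unit) : 'I_n.+1 :=
  if u is inl i then lift ord_max i else ord_max.
apply: (@distributive_surj _ _ f).
  by move=> j; case: (unliftP ord_max j) => [i -> | ->];
    [exists (inl i) | exists (inr tt)].
exact: distributive_sum IHn distributive_unit.
Qed.

End Distributivity.

Theorem theorem3p4 (P : Type) (le : P -> P -> Prop) (HP : forcing_notion le) :
  (* every finite cardinal belongs to D_P *)
  (forall n : nat, distributive le 'I_n) /\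
  (* D_P is *-closed *)
  (forall X Y : Type, distributive le X -> card_le_star Y X -> distributive le Y) /\
  (* D_P is union-regular: directed ... *)
  (forall X Y : Type, distributive le X -> distributive le Y ->
     exists Z : Type, [/\ distributive le Z, card_le X Z & card_le Y Z]) /\
  (* ... and closed under bounding D_P-indexed families of D_P-sized sets *)
  (forall (X : Type) (A : X -> Type),
     distributive le X -> (forall x, distributive le (A x)) ->
     exists B : Type, distributive le B /\ forall x, card_le (A x) B).
Proof.
split; first exact: distributive_ord HP.
split; first exact: distributive_card_le_star HP.
split.
  move=> X Y distX distY; exists (X + Y)%type; split.
  - exact: (distributive_sum HP distX distY).
  - by exists inl => a b [].
  - by exists inr => a b [].
move=> X A distX distA; exists {x : X & A x}; split.
  exact: distributive_sigma distX distA.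
by move=> x; exists (existT _ x) => a b; apply: inj_pair2.
Qed.
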